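(* Let $\gamma=(\gamma_1,\dots,\gamma_b)$ be a parallel map on $V=V_1\oplus\cdots\oplus V_b$, $V_i\cong(\mathbb F_2)^m$, with $0\gamma=0$. Let $U,U'$ be subspaces of $V$ of dimension $n-1$ with $J_U\cap J_{U'}=\emptyset$. Suppose that for every $i\notin J_U\cup J_{U'}$, $\gamma_i$ is differentially $2^r$-uniform with $r<m$ and strongly $(r-1)$-anti-invariant, and for every $j\in J_U\cup J_{U'}$, $\gamma_j$ is differentially $2^r$-uniform with $r<m-1$ and strongly $r$-anti-invariant. If $\gamma$ maps $\mathcal{LA}_U(W_1|W_2)$ onto a non-trivial partition $\mathcal{LA}_{U'}(W_1'|W_2')$, then $W_1,W_1',W_2,W_2'$ are walls and $W_1=W_1'=W_2=W_2'$; in particular both partitions are linear.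
   Context: Let $m,b>1$, $n=mb$, $V=(\mathbb F_2)^n=V_1\oplus\cdots\oplus V_b$, $V_i\cong(\mathbb F_2)^m$. Permutations act on the right. A parallel map is $\gamma\in\mathrm{Sym}(V)$ with $(v_1\oplus\cdots\oplus v_b)\gamma=v_1\gamma_1\oplus\cdots\oplus v_b\gamma_b$, $\gamma_i\in\mathrm{Sym}(V_i)$. A wall is $\bigoplus_{i\in I}V_i$ with $\emptyset\ne I\subsetneq\{1,\dots,b\}$. $J_U=\{j:V_j\cap U\subsetneq V_j\}$. $f:(\mathbb F_2)^m\to(\mathbb F_2)^m$ is differentially $\delta$-uniform if $\delta=\max_{a\ne0,b}|\{x:f(x+a)+f(x)=b\}|$; for $f(0)=0$, $f$ is strongly $s$-anti-invariant if for all subspaces $A,B$ with $f(A)=B$, either $\dim A=\dim B<m-s$ or $A=B=(\mathbb F_2)^m$. A permutation maps $\mathcal A$ onto $\mathcal B$ if it sends the blocks of $\mathcal A$ exactly onto those of $\mathcal B$; trivial partitions are the singleton partition and $\{V\}$. $\mathcal L(W)=\{W+v:v\in V\}$. For subspaces $W_1,W_2\subseteq U$, $\mathcal{LA}_U(W_1|W_2)=\{W_1+v:v\in U\}\cup\{(W_2+\bar v)+v:v\in U\}$ for any $\bar v\in V\setminus U$. *)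

From HB Require Import structures.
From mathcomp Require Import all_boot all_order all_algebra all_fingroup.
Set Implicit Arguments. Unset Strict Implicit. Unset Printing Implicit Defensive.
Import GRing.Theory.
Local Open Scope ring_scope.

(* Block space V_i ~ (F_2)^m and the full space V = V_1 (+) ... (+) V_b,
   modelled as functions from block indices to block vectors. *)
Definition Blk (m : nat) := 'rV['F_2]_m.
Definition Sp (m b : nat) := {ffun 'I_b -> Blk m}.

Definition sset m b (U : {vspace Sp m b}) : {set Sp m b} := [set x | x \in U].

Definition block m b (j : 'I_b) : {set Sp m b} :=
  [set x : Sp m b | [forall k, (k != j) ==> (x k == 0)]].

Definition JU m b (U : {vspace Sp m b}) : {set 'I_b} :=
  [set j | (block m j :&: sset U) \proper block m j].

Definition is_wall m b (W : {vspace Sp m b}) : Prop :=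
  exists I : {set 'I_b}, [/\ I != set0, I != setT &
    sset W = [set x : Sp m b | [forall k, (k \notin I) ==> (x k == 0)]]].

Definition parallel m b (g : {perm Sp m b}) (gi : 'I_b -> {perm Blk m}) : Prop :=
  forall x : Sp m b, g x = [ffun i => gi i (x i)].

Definition diff_unif m (f : Blk m -> Blk m) : nat :=
  \max_(a : Blk m | a != 0) \max_(c : Blk m)
     #|[set x : Blk m | (f (x + a) + f x)%R == c]|.

Definition strongly_anti_inv m (s : nat) (f : Blk m -> Blk m) : Prop :=
  f 0 = 0 /\
  forall A B : {vspace Blk m},
    f @: [set x | x \in A] = [set x | x \in B] ->
    (\dim A = \dim B /\ (\dim A < m - s)%N) \/ (A = fullv /\ B = fullv).

Definition coset m b (W : {vspace Sp m b}) (v : Sp m b) : {set Sp m b} :=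
  [set (w + v)%R | w : Sp m b in sset W].

Definition Lpart m b (W : {vspace Sp m b}) : {set {set Sp m b}} :=
  [set coset W v | v : Sp m b].

(* LA_U(W1|W2), with the auxiliary vector vb (to be taken outside U) *)
Definition LApart m b (U W1 W2 : {vspace Sp m b}) (vb : Sp m b)
  : {set {set Sp m b}} :=
  [set coset W1 v | v in sset U] :|: [set coset W2 (vb + v) | v in sset U].

Definition maps_onto (T : finType) (g : T -> T) (A B : {set {set T}}) : Prop :=
  [set g @: X | X : {set T} in A] = B.

Definition nontrivial_part (T : finType) (B : {set {set T}}) : Prop :=
  B != [set [set x] | x : T] /\ B != [set [set: T]].

From Pilot Require Import Defs.
From HB Require Import structures.
From mathcomp Require Import all_boot all_order all_algebra all_fingroup all_field.
From mathcomp Require Import zify.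
Set Implicit Arguments. Unset Strict Implicit. Unset Printing Implicit Defensive.
Import GRing.Theory.
Local Open Scope ring_scope.

(* The block of LA_U(W1|W2) through x is the coset of W1 or of W2 through x,
   according as x lies in U or not; so g maps one partition onto the other
   exactly when y + x and g y + g x lie in the corresponding direction spaces.
   At x = 0 this says that g maps W1 onto W1'.  Restricted to a block V_i this
   makes gamma_i map the slice W1 \cap V_i onto W1' \cap V_i, and every
   derivative of gamma_i in a direction a of W1 \cap V_i sends the vectors of
   V_i lying in U with image in U' (at least half of V_i) into the coset of
   W1' \cap V_i through gamma_i(a).
   Differential uniformity then forces W1' \cap V_i to be large, and strong
   anti-invariance forces it to be all of V_i as soon as W1 has a vector with
   nonzero i-th coordinate.  Thus W1 is a sum of blocks, a wall since the image
   partition is not the singleton one and U is a proper subspace.  A parallel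
   map permutes the cosets of a wall, and the coset relation at points x
   switching between U and U' then gives W1' = W2' = W2 = W1. *)

Section Char2.
Variable V : lmodType 'F_2.
Implicit Types x y : V.

Lemma oppr_F2 x : - x = x.
Proof. by rewrite -scaleN1r (_ : -1 = 1 :> 'F_2) ?scale1r //; apply: val_inj. Qed.

Lemma addrr_F2 x : x + x = 0.
Proof. by rewrite -{1}[x]oppr_F2 addNr. Qed.

Lemma addrK_F2 x y : y + x + x = y.
Proof. by rewrite -addrA addrr_F2 addr0. Qed.

Lemma addKr_F2 x y : x + (x + y) = y.
Proof. by rewrite addrA addrr_F2 add0r. Qed.

Lemma addr_eq0_F2 x y : (x + y == 0) = (x == y).
Proof. by rewrite -[x == y]subr_eq0 oppr_F2. Qed.

End Char2.

Lemma hyperplane_addv (vT : vectType 'F_2) (U : {vspace vT}) (x y : vT) :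
  \dim U = (\dim {:vT}).-1 -> x \notin U -> y \notin U -> x + y \in U.
Proof.
move=> dimU xU yU.
have Ux_full : (U + <[x]>)%VS = fullv.
  have : (\dim U < \dim (U + <[x]>))%N.
    by rewrite (ltn_leqif (dimv_leqif_sup (addvSl U <[x]>))) subv_add subvv -memvE.
  have := dimvS (subvf (U + <[x]>)%VS).
  by move=> le lt; apply/eqP; rewrite eqEdim subvf /=; lia.
have /memv_addP[u uU [_ /vlineP[k ->] yE]] : y \in (U + <[x]>)%VS.
  by rewrite Ux_full memvf.
have [k0|k1] : k = 0 \/ k = 1 by case: {yE} k => -[|[|]] // ?; [left|right]; apply: val_inj.
  by move: yU; rewrite yE k0 scale0r addr0 uU.
by rewrite yE k1 scale1r addrC addrK_F2.
Qed.

Lemma dim_Sp m b : \dim {: Sp m b} = (m * b)%N.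
Proof. by rewrite dimvf /dim /= card_ord dim_matrix mul1r mulnC. Qed.

Lemma card_Blk m : #|{: Blk m}| = (2 ^ m)%N.
Proof. by rewrite card_mx card_Fp // mul1n. Qed.

Lemma card_vspace_Blk m (Y : {vspace Blk m}) : #|[set s | s \in Y]| = (2 ^ \dim Y)%N.
Proof. by rewrite cardsE card_vspace card_Fp. Qed.

Definition inblk m b (i : 'I_b) (s : Blk m) : Sp m b :=
  [ffun j => if j == i then s else 0].

Fact inblk_is_semilinear m b (i : 'I_b) : semilinear (@inblk m b i).
Proof.
by split=> [a s|s t]; apply/ffunP => j; rewrite !ffunE; case: (j == i);
  rewrite ?scaler0 ?addr0.
Qed.
HB.instance Definition _ m b (i : 'I_b) :=
  GRing.isSemilinear.Build 'F_2 (Blk m) (Sp m b) _ (@inblk m b i)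
    (@inblk_is_semilinear m b i).

Definition slice m b (i : 'I_b) (W : {vspace Sp m b}) : {vspace Blk m} :=
  (linfun (@inblk m b i) @^-1: W)%VS.

Definition blocks_sum m b (I : {set 'I_b}) : {set Sp m b} :=
  [set x : Sp m b | [forall k, (k \notin I) ==> (x k == 0)]].

Definition blk_support m b (W : {vspace Sp m b}) : {set 'I_b} :=
  [set i | [exists w : Sp m b, (w \in W) && (w i != 0)]].

Section Blocks.
Variables m b : nat.
Implicit Types (i k : 'I_b) (s t : Blk m) (x : Sp m b) (U W : {vspace Sp m b}).

Lemma inblkE i s k : inblk i s k = if k == i then s else 0.
Proof. by rewrite ffunE. Qed.

Lemma mem_slice i W s : (s \in slice i W) = (inblk i s \in W).
Proof. by rewrite -memv_preim lfunE. Qed.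

Lemma sum_inblk x : \sum_k inblk k (x k) = x.
Proof.
apply/ffunP => j; rewrite sum_ffunE (bigD1 j) //= big1 ?addr0 ?inblkE ?eqxx //.
by move=> k kj; rewrite inblkE eq_sym (negbTE kj).
Qed.

Lemma JU_slice U i : (i \in JU U) = (slice i U != fullv).
Proof.
rewrite inE properEneq subsetIl andbT; congr negb.
apply/eqP/eqP => [/setIidPl sub | full].
  apply/vspaceP => s; rewrite memvf mem_slice.
  have := subsetP sub (inblk i s); rewrite !inE; apply.
  by apply/forallP => k; apply/implyP; rewrite inblkE => /negbTE ->.
apply/setIidPl/subsetP => x; rewrite !inE => /forallP xi.
suff <- : inblk i (x i) = x by rewrite -mem_slice full memvf.
apply/ffunP => k; rewrite inblkE; case: eqP => [-> //|/eqP ki].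
by apply/esym/eqP; move/implyP: (xi k); apply.
Qed.

Lemma notin_JU_inblk U i s : i \notin JU U -> inblk i s \in U.
Proof. by rewrite JU_slice negbK -mem_slice => /eqP ->; rewrite memvf. Qed.

Lemma JU_witness U i : i \in JU U -> exists t, inblk i t \notin U.
Proof.
move=> iJ; apply/existsP; apply: contraTT iJ => /existsPn inU.
by rewrite JU_slice negbK; apply/eqP/vspaceP => t; rewrite memvf mem_slice; apply/negbNE.
Qed.

Lemma JU_neq0 U x : x \notin U -> exists i, i \in JU U.
Proof.
move=> xU; apply/existsP; apply: contraNT xU => /existsPn notJ.
by rewrite -[x]sum_inblk; apply: rpred_sum => i _; apply: notin_JU_inblk.
Qed.

Lemma slice_full_notin_JU U W i : (W <= U)%VS -> slice i W = fullv -> i \notin JU U.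
Proof.
by move=> WU full; rewrite JU_slice negbK eqEsubv subvf -full; apply: lpreimS.
Qed.

Lemma card_slice_hyperplane U i :
  \dim U = (m * b).-1 -> (2 ^ m <= 2 * #|[set s | s \in slice i U]|)%N.
Proof.
move=> hU; set S := [set s | s \in slice i U].
suff : (#|~: S| <= #|S|)%N by rewrite -card_Blk -(cardsC S) mul2n -addnn leq_add2l.
have [->|[t tS]] := set_0Vmem (~: S); first by rewrite cards0.
rewrite -(card_imset _ (addIr t)); apply/subset_leq_card/subsetP => _ /imsetP[s sS ->].
move: sS tS; rewrite !inE !mem_slice raddfD; apply: hyperplane_addv.
by rewrite dim_Sp.
Qed.

Lemma blk_support_neq0 W : W != 0%VS -> blk_support W != set0.
Proof.
apply: contraNneq => W0; apply/eqP/vspaceP => w; rewrite memv0.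
apply/idP/eqP => [wW|->]; last exact: mem0v.
apply/ffunP => k; rewrite ffunE; apply/eqP/negPn/negP => wk.
have : k \in blk_support W by rewrite inE; apply/existsP; exists w; rewrite wW.
by rewrite W0 inE.
Qed.

Lemma sset_blocks_sum W :
  (forall i w, w \in W -> w i != 0 -> slice i W = fullv) ->
  sset W = blocks_sum m (blk_support W).
Proof.
move=> full; apply/setP => x; rewrite !inE; apply/idP/forallP => [xW k | xI].
  apply/implyP; apply: contraNT => xk; rewrite inE.
  by apply/existsP; exists x; rewrite xW.
rewrite -[x]sum_inblk; apply: rpred_sum => k _.
have [|kI] := boolP (k \in blk_support W).
  by rewrite inE => /existsP[w /andP[wW wk]]; rewrite -mem_slice (full k w wW wk) memvf.
by move/implyP: (xI k) => /(_ kI)/eqP ->; rewrite raddf0 mem0v.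
Qed.

End Blocks.

Lemma card_le_diff_unif m (f : Blk m -> Blk m) (a : Blk m) (S C : {set Blk m}) :
  a != 0 -> {in S, forall s, f (s + a) + f s \in C} ->
  (#|S| <= #|C| * diff_unif f)%N.
Proof.
move=> a0 hS.
rewrite -sum1_card (partition_big (fun s => f (s + a) + f s) (mem C)) //=.
rewrite -sum_nat_const; apply: leq_sum => c _.
apply: leq_trans (leq_bigmax_cond a a0); apply: leq_trans (leq_bigmax c).
by rewrite sum1dep_card; apply/subset_leq_card/subsetP => x; rewrite !inE => /andP[].
Qed.

(* The block of LApart U W1 W2 vb containing x is the coset of LAdir U W1 W2 x
   through x. *)
Definition LAdir m b (U W1 W2 : {vspace Sp m b}) (x : Sp m b) :=
  if x \in U then W1 else W2.

Definition coset_invariant m b (g : Sp m b -> Sp m b) (W : {vspace Sp m b}) :=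
  forall x y, (g y + g x \in W) = (y + x \in W).

Section Partitions.
Variables m b : nat.
Implicit Types (x y : Sp m b) (U W : {vspace Sp m b}).

Lemma mem_coset W x y : (y \in Defs.coset W x) = (y + x \in W).
Proof.
apply/imsetP/idP => [[w] | yx]; first by rewrite inE => wW ->; rewrite addrK_F2.
by exists (y + x); rewrite ?inE ?addrK_F2.
Qed.

Lemma coset0 x : Defs.coset 0 x = [set x].
Proof. by apply/setP => y; rewrite mem_coset memv0 addr_eq0_F2 inE. Qed.

Lemma Lpart0 : Lpart (0 : {vspace Sp m b}) = [set [set x] | x : Sp m b].
Proof. by apply: eq_imset => x; rewrite coset0. Qed.

Variables (U W1 W2 : {vspace Sp m b}) (vb : Sp m b).
Hypotheses (hU : \dim U = (m * b).-1) (hvb : vb \notin U).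

Lemma LApart_coset x : Defs.coset (LAdir U W1 W2 x) x \in LApart U W1 W2 vb.
Proof.
rewrite /LAdir inE; case: ifPn => xU; apply/orP; [left|right]; apply/imsetP.
  by exists x; rewrite ?inE.
exists (vb + x); last by rewrite addKr_F2.
by rewrite inE hyperplane_addv ?dim_Sp.
Qed.

Lemma LApart_mem (Z : {set Sp m b}) x y :
  (W1 <= U)%VS -> (W2 <= U)%VS -> Z \in LApart U W1 W2 vb -> x \in Z -> y \in Z ->
  y + x \in LAdir U W1 W2 x.
Proof.
move=> sW1 sW2; rewrite inE => /orP[] /imsetP[v]; rewrite inE => vU ->.
  rewrite !mem_coset /LAdir => xv yv.
  have -> : x \in U by rewrite -[x](addrK_F2 v) rpredD // (subvP sW1).
  by rewrite -(addrK_F2 v (y + x)) -addrA addrACA rpredD.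
rewrite !mem_coset /LAdir => xv yv.
have /negbTE -> : x \notin U.
  apply: contra hvb => xU; rewrite -[vb](addrK_F2 v) -[vb + v](addKr_F2 x).
  by rewrite rpredD // rpredD // (subvP sW2).
by rewrite -(addrK_F2 (vb + v) (y + x)) -addrA addrACA rpredD.
Qed.

End Partitions.

Lemma LApart_Lpart m b (U W : {vspace Sp m b}) vb :
  \dim U = (m * b).-1 -> vb \notin U -> LApart U W W vb = Lpart W.
Proof.
move=> hU hvb; apply/setP => Z; apply/idP/imsetP => [|[v _ ->]].
  by rewrite inE => /orP[] /imsetP[v _ ->]; eexists.
by have := LApart_coset W W hU hvb v; rewrite /LAdir if_same.
Qed.

Lemma coset_invariant0 m b (g : {perm Sp m b}) : coset_invariant g 0.
Proof. by move=> x y; rewrite !memv0 !addr_eq0_F2 (inj_eq perm_inj). Qed.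

Section Parallel.
Variables (m b : nat) (g : {perm Sp m b}) (gi : 'I_b -> {perm Blk m}).
Hypothesis hpar : parallel g gi.

Lemma blocks_sum_coset_invariant I (W : {vspace Sp m b}) :
  sset W = blocks_sum m I -> coset_invariant g W.
Proof.
move=> WI x y; have memW z : (z \in W) = (z \in blocks_sum m I) by rewrite -WI inE.
rewrite !memW !inE; apply: eq_forallb => k; rewrite !ffunE !hpar !ffunE.
by rewrite !addr_eq0_F2 (inj_eq perm_inj).
Qed.

Hypothesis h0 : g 0 = 0.

Lemma parallel_gi0 i : gi i 0 = 0.
Proof. by have /(congr1 (fun x : Sp m b => x i)) := h0; rewrite hpar !ffunE. Qed.

Lemma parallel_inblk i s : g (inblk i s) = inblk i (gi i s).
Proof.
by apply/ffunP => j; rewrite hpar !ffunE; case: eqP => [-> //|_]; rewrite parallel_gi0.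
Qed.

End Parallel.

Section LApartMaps.
Variables (m b : nat) (g : {perm Sp m b}) (gi : 'I_b -> {perm Blk m}).
Variables (U U' W1 W2 W1' W2' : {vspace Sp m b}) (vb vb' : Sp m b).
Hypothesis hm : (1 < m)%N.
Hypotheses (hpar : parallel g gi) (h0 : g 0 = 0).
Hypotheses (hU : \dim U = (m * b).-1) (hU' : \dim U' = (m * b).-1).
Hypothesis hJ : JU U :&: JU U' = set0.
Hypothesis hout : forall i : 'I_b, i \notin JU U :|: JU U' ->
  exists r : nat, [/\ (r < m)%N, diff_unif (gi i) = (2 ^ r)%N &
                      strongly_anti_inv (r - 1) (gi i)].
Hypothesis hin : forall j : 'I_b, j \in JU U :|: JU U' ->
  exists r : nat, [/\ (r < m - 1)%N, diff_unif (gi j) = (2 ^ r)%N &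
                      strongly_anti_inv r (gi j)].
Hypotheses (hW1 : (W1 <= U)%VS) (hW2 : (W2 <= U)%VS).
Hypotheses (hW1' : (W1' <= U')%VS) (hW2' : (W2' <= U')%VS).
Hypotheses (hvb : vb \notin U) (hvb' : vb' \notin U').
Hypothesis hmap : maps_onto g (LApart U W1 W2 vb) (LApart U' W1' W2' vb').

Lemma LApart_transfer x y :
  (y + x \in LAdir U W1 W2 x) = (g y + g x \in LAdir U' W1' W2' (g x)).
Proof.
have selfW (W : {vspace Sp m b}) z : z \in Defs.coset W z.
  by rewrite mem_coset addrr_F2 mem0v.
apply/idP/idP => [yx | gyx].
  have XB : g @: Defs.coset (LAdir U W1 W2 x) x \in LApart U' W1' W2' vb'.
    by rewrite -hmap imset_f // LApart_coset.
  by apply: (LApart_mem hvb' hW1' hW2' XB); apply: imset_f; rewrite ?selfW ?mem_coset.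
have := LApart_coset W1' W2' hU' hvb' (g x); rewrite -hmap => /imsetP[X XA XE].
have gX z : (g z \in g @: X) = (z \in X) by rewrite mem_imset //; apply: perm_inj.
have xX : x \in X by rewrite -gX -XE selfW.
have yX : y \in X by rewrite -gX -XE mem_coset.
exact: (LApart_mem hvb hW1 hW2 XA xX yX).
Qed.

Lemma mem_W1' y : (g y \in W1') = (y \in W1).
Proof.
by have := LApart_transfer 0 y; rewrite /LAdir h0 !mem0v !addr0 => ->.
Qed.

Lemma LApart_eq_of_coset_invariant u x0 :
  u \in U -> g u \notin U' -> x0 \notin U -> g x0 \in U' ->
  coset_invariant g W1 -> [/\ W1' = W1, W2' = W1 & W2 = W1].
Proof.
move=> uU guU x0U gx0U invW1.
have W1'E : W1' = W1.
  apply/vspaceP => z; rewrite -[z](permKV g) mem_W1'.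
  by rewrite -[in RHS](addr0 (g _)) -h0 invW1 addr0.
split=> //; apply/vspaceP => z.
  have := LApart_transfer u ((g^-1)%g (z + g u)).
  by rewrite /LAdir uU (negbTE guU) permKV addrK_F2 => <-; rewrite -invW1 permKV addrK_F2.
have := LApart_transfer x0 (z + x0).
by rewrite /LAdir (negbTE x0U) gx0U W1'E invW1 addrK_F2.
Qed.

Lemma mem_slice_W1' i s : (gi i s \in slice i W1') = (s \in slice i W1).
Proof. by rewrite !mem_slice -(parallel_inblk hpar h0) mem_W1'. Qed.

Lemma image_slice_W1 i :
  gi i @: [set s | s \in slice i W1] = [set s | s \in slice i W1'].
Proof.
apply/setP => t; rewrite inE -[t](permKV (gi i)) mem_slice_W1' mem_imset ?inE //.
exact: perm_inj.
Qed.

Lemma diff_in_slice i s w :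
  inblk i s \in U -> g (inblk i s) \in U' -> w \in W1 ->
  gi i (s + w i) + gi i s + gi i (w i) \in slice i W1'.
Proof.
move=> sU gsU wW; rewrite mem_slice.
have -> : inblk i (gi i (s + w i) + gi i s + gi i (w i)) =
          g (w + inblk i s) + g (inblk i s) + g w.
  apply/ffunP => j; rewrite !ffunE !hpar !ffunE.
  case: eqP => [->|_]; first by rewrite [w i + s]addrC.
  by rewrite (parallel_gi0 hpar h0) !addr0 addrr_F2.
apply: rpredD; last by rewrite mem_W1'.
have := LApart_transfer (inblk i s) (w + inblk i s).
by rewrite /LAdir sU gsU addrK_F2 wW.
Qed.

Lemma card_lt_slice i (S : {set Blk m}) w r :
  {in S, forall s, inblk i s \in U /\ g (inblk i s) \in U'} ->
  w \in W1 -> w i != 0 -> diff_unif (gi i) = (2 ^ r)%N -> (2 ^ r < #|S|)%N ->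
  (#|S| < 2 ^ (\dim (slice i W1') + r))%N.
Proof.
move=> hS wW wi0 du big.
have diffS w' : w' \in W1 ->
    {in S, forall s, gi i (s + w' i) + gi i s + gi i (w' i) \in slice i W1'}.
  by move=> w'W s /hS[sU gsU]; apply: diff_in_slice.
have [W1'0 | W1'n0] := eqVneq (slice i W1') 0%VS.
  (* every derivative of [gi i] in direction [w i] is then the constant [gi i (w i)] *)
  move: big; rewrite ltnNge => /negP[].
  apply: leq_trans (card_le_diff_unif (f := gi i) (C := [set gi i (w i)]) wi0 _) _.
    by move=> s sS; have := diffS w wW s sS; rewrite W1'0 memv0 addr_eq0_F2 inE.
  by rewrite cards1 mul1n du.
set y := vpick (slice i W1'); set a := (gi i)^-1%g y.
have ya : gi i a = y by rewrite permKV.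
have a0 : a != 0.
  apply: contra_neq W1'n0 => a0; apply/eqP.
  by rewrite -vpick0 -/y -ya a0 (parallel_gi0 hpar h0).
have aW : inblk i a \in W1 by rewrite -mem_slice -mem_slice_W1' ya memv_pick.
pose C := [set c | c \in slice i W1'] :\ 0.
have hC : {in S, forall s, gi i (s + a) + gi i s \in C}.
  move=> s sS; rewrite !inE addr_eq0_F2 (inj_eq perm_inj) -subr_eq0 addrC addKr.
  have := diffS _ aW s sS; rewrite inblkE eqxx ya => dS.
  by rewrite a0 -(addrK_F2 y (_ + _)) rpredD // memv_pick.
apply: leq_ltn_trans (card_le_diff_unif a0 hC) _.
have := cardsD1 0 [set c | c \in slice i W1']; rewrite card_vspace_Blk inE mem0v => cardC.
by rewrite du expnD ltn_pmul2r ?expn_gt0 // cardC.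
Qed.

(* The bound on #|S| is stated so that it covers both S = V_i \cap U with
   s = r and S = V_i with s = r - 1. *)
Lemma slices_W1_full_of_card i (S : {set Blk m}) w r s :
  {in S, forall t, inblk i t \in U /\ g (inblk i t) \in U'} ->
  w \in W1 -> w i != 0 -> diff_unif (gi i) = (2 ^ r)%N ->
  strongly_anti_inv s (gi i) -> (s.+1 < m)%N -> (2 ^ (m - s + r) <= 2 * #|S|)%N ->
  slice i W1 = fullv /\ slice i W1' = fullv.
Proof.
move=> hS wW wi0 du [_ anti] sm hcard.
have big : (2 ^ r < #|S|)%N.
  rewrite -(ltn_pmul2l (isT : 0 < 2)%N) -expnS; apply: leq_trans hcard.
  by rewrite ltn_exp2l //; lia.
have small := card_lt_slice hS wW wi0 du big.
case: (anti _ _ (image_slice_W1 i)) => [[dimE dim_lt] | //].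
have : (2 ^ (m - s + r) < 2 ^ (\dim (slice i W1') + r).+1)%N.
  by rewrite expnS; apply: leq_ltn_trans hcard _; rewrite ltn_pmul2l.
by rewrite ltn_exp2l // -dimE; lia.
Qed.

Lemma disjoint_JU : [disjoint JU U & JU U'].
Proof. by rewrite -setI_eq0 hJ. Qed.

Lemma exists_in_U_notin_U' : exists2 u, u \in U & g u \notin U'.
Proof.
have [j jJ'] := JU_neq0 hvb'; have [t tU'] := JU_witness jJ'.
exists (inblk j ((gi j)^-1%g t)); last by rewrite (parallel_inblk hpar h0) permKV.
by apply: notin_JU_inblk; rewrite (disjointFl disjoint_JU jJ').
Qed.

Lemma exists_notin_U_in_U' : exists2 x, x \notin U & g x \in U'.
Proof.
have [j jJ] := JU_neq0 hvb; have [t tU] := JU_witness jJ.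
exists (inblk j t); rewrite // (parallel_inblk hpar h0).
by apply: notin_JU_inblk; rewrite (disjointFr disjoint_JU jJ).
Qed.

Lemma support_notin_JU i w : w \in W1 -> w i != 0 -> i \notin JU U :|: JU U'.
Proof.
move=> wW wi0; rewrite inE negb_or; apply/andP; split; apply/negP => iJ.
  have /hin[r [rm du anti]] : i \in JU U :|: JU U' by rewrite inE iJ.
  have iJ' := disjointFr disjoint_JU iJ.
  pose S := [set t | t \in slice i U].
  have hS : {in S, forall t, inblk i t \in U /\ g (inblk i t) \in U'}.
    move=> t; rewrite inE mem_slice => tU; split=> //.
    by rewrite (parallel_inblk hpar h0) notin_JU_inblk ?iJ'.
  have cardS : (2 ^ (m - r + r) <= 2 * #|S|)%N.
    by rewrite subnK ?card_slice_hyperplane //; lia.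
  have [W1full _] := slices_W1_full_of_card hS wW wi0 du anti (ltac:(lia)) cardS.
  by move: iJ; apply/negP; apply: slice_full_notin_JU hW1 W1full.
have /hin[r [rm du anti]] : i \in JU U :|: JU U' by rewrite inE iJ orbT.
have iJU := disjointFl disjoint_JU iJ.
pose S := gi i @^-1: [set t | t \in slice i U'].
have hS : {in S, forall t, inblk i t \in U /\ g (inblk i t) \in U'}.
  move=> t; rewrite !inE mem_slice => tU'; split; last by rewrite (parallel_inblk hpar h0).
  by rewrite notin_JU_inblk ?iJU.
have cardS : (2 ^ (m - r + r) <= 2 * #|S|)%N.
  rewrite card_preimset; last exact: perm_inj.
  by rewrite subnK ?card_slice_hyperplane //; lia.
have [_ W1'full] := slices_W1_full_of_card hS wW wi0 du anti (ltac:(lia)) cardS.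
by move: iJ; apply/negP; apply: slice_full_notin_JU hW1' W1'full.
Qed.

Lemma slice_W1_full i w : w \in W1 -> w i != 0 -> slice i W1 = fullv.
Proof.
move=> wW wi0; have iJ := support_notin_JU wW wi0.
have [r [rm du anti]] := hout iJ.
move: iJ; rewrite inE negb_or => /andP[iJ iJ'].
apply: (slices_W1_full_of_card (S := [set: Blk m]) _ wW wi0 du anti _ _).1.
- by move=> t _; rewrite (parallel_inblk hpar h0) !notin_JU_inblk.
- by lia.
- by rewrite cardsT card_Blk -expnS leq_exp2l //; lia.
Qed.

Lemma W1_is_wall : W1 != 0%VS -> is_wall W1.
Proof.
move=> W1n0; exists (blk_support W1); split; first exact: blk_support_neq0.
  have [j jJ] := JU_neq0 hvb; apply/eqP => suppT.
  have : j \in blk_support W1 by rewrite suppT inE.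
  rewrite inE => /existsP[w /andP[wW wj]].
  by have := support_notin_JU wW wj; rewrite inE jJ.
by apply: sset_blocks_sum => i w; apply: slice_W1_full.
Qed.

End LApartMaps.

Theorem corollary3p13 (m b : nat) (hm : (1 < m)%N) (hb : (1 < b)%N)
  (g : {perm Sp m b}) (gi : 'I_b -> {perm Blk m})
  (hpar : parallel g gi) (h0 : g 0 = 0)
  (U U' W1 W2 W1' W2' : {vspace Sp m b})
  (hU : \dim U = (m * b).-1) (hU' : \dim U' = (m * b).-1)
  (hJ : JU U :&: JU U' = set0)
  (hout : forall i : 'I_b, i \notin JU U :|: JU U' ->
     exists r : nat, [/\ (r < m)%N, diff_unif (gi i) = (2 ^ r)%N &
                         strongly_anti_inv (r - 1) (gi i)])
  (hin : forall j : 'I_b, j \in JU U :|: JU U' ->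
     exists r : nat, [/\ (r < m - 1)%N, diff_unif (gi j) = (2 ^ r)%N &
                         strongly_anti_inv r (gi j)])
  (hW1 : (W1 <= U)%VS) (hW2 : (W2 <= U)%VS)
  (hW1' : (W1' <= U')%VS) (hW2' : (W2' <= U')%VS)
  (vb vb' : Sp m b) (hvb : vb \notin U) (hvb' : vb' \notin U')
  (hmap : maps_onto g (LApart U W1 W2 vb) (LApart U' W1' W2' vb'))
  (hnt : nontrivial_part (LApart U' W1' W2' vb')) :
  [/\ is_wall W1, is_wall W1', is_wall W2 & is_wall W2'] /\
  [/\ W1 = W1', W1' = W2 & W2 = W2'] /\
  (LApart U W1 W2 vb = Lpart W1 /\ LApart U' W1' W2' vb' = Lpart W1').
Proof.
have [u uU guU'] := exists_in_U_notin_U' hpar h0 hJ hvb'.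
have [x0 x0U gx0U'] := exists_notin_U_in_U' hpar h0 hJ hvb.
have LApart_eq := LApart_eq_of_coset_invariant h0 hU hU' hW1 hW2 hW1' hW2' hvb hvb' hmap
  uU guU' x0U gx0U'.
have W1n0 : W1 != 0%VS.
  apply: contraNneq hnt.1 => W10; apply/eqP.
  have := LApart_eq; rewrite W10 => /(_ (coset_invariant0 g))[-> -> _].
  by rewrite LApart_Lpart // Lpart0.
have wallW1 := W1_is_wall hm hpar h0 hU hU' hJ hout hin hW1 hW2 hW1' hW2' hvb hvb'
  hmap W1n0.
have [I [_ _ W1E]] := wallW1.
have [-> -> ->] := LApart_eq (blocks_sum_coset_invariant hpar W1E).
by rewrite !LApart_Lpart.
Qed.
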